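(* Suppose $(G_i,N_i,\theta_i)_{\mathcal H}\ge_c(H_i,M_i,\varphi_i)_{\mathcal H}$ for $i=1,2$. Let $G=G_1\times G_2$, $H=H_1\times H_2$, $N=N_1\times N_2$, $M=M_1\times M_2$, $\theta=\theta_1\times\theta_2$ and $\varphi=\varphi_1\times\varphi_2$. Then $(G_{\theta^{\mathcal H}},N,\theta)_{\mathcal H}\ge_c(H_{\varphi^{\mathcal H}},M,\varphi)_{\mathcal H}$.
   Context: All groups are finite; $p$ is a fixed prime. $\mathbb Q^{\mathrm{ab}}\subseteq\mathbb C$ is generated by all roots of unity, $\mathcal G=\mathrm{Gal}(\mathbb Q^{\mathrm{ab}}/\mathbb Q)$, $\mathcal H\le\mathcal G$ consists of those $\sigma$ for which there is an integer $f$ with $\sigma(\xi)=\xi^{p^f}$ for all roots of unity $\xi$ of order prime to $p$. For $N\trianglelefteq G$, $\theta\in\mathrm{Irr}(N)$, $g\in G$, $\sigma\in\mathcal G$: $\theta^{g\sigma}(n)=\sigma(\theta(gng^{-1}))$; $A_\theta$ the stabilizer in $A\le G\times\mathcal G$; $\theta^{\mathcal H}$ the $\mathcal H$-orbit; $G_{\theta^{\mathcal H}}=\{g:\theta^g\in\theta^{\mathcal H}\}$. $(G,N,\theta)_{\mathcal H}$ is an $\mathcal H$-triple if $N\trianglelefteq G$, $\theta\in\mathrm{Irr}(N)$, $G_{\theta^{\mathcal H}}=G$. Projective representation $\mathcal P$ with factor set $\alpha$: $\mathcal P(x)\mathcal P(y)=\alpha(x,y)\mathcal P(xy)$. For $G$-invariant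 $\theta$, $\mathcal P$ is associated with $\theta$ if $\mathcal P_N$ affords $\theta$ and $\mathcal P(ng)=\mathcal P(n)\mathcal P(g)$, $\mathcal P(gn)=\mathcal P(g)\mathcal P(n)$. $\mathcal Q\sim\mu\mathcal P$ means $\mathcal Q(x)=\mu(x)M^{-1}\mathcal P(x)M$ for fixed invertible $M$. For $\mathcal P$ associated with $\theta$ on $G_\theta$ with entries in $\mathbb Q^{\mathrm{ab}}$ and $\theta^{x\sigma}=\theta$: $\mathcal P^{x\sigma}(y)=\sigma(\mathcal P(xyx^{-1}))$, and $\mu_{x\sigma}$ is the unique function $G_\theta\to\mathbb C^\times$, constant on $N$-cosets, $\mu_{x\sigma}(1)=1$, with $\mathcal P^{x\sigma}\sim\mu_{x\sigma}\mathcal P$. $(G,N,\theta)_{\mathcal H}\ge_c(H,M,\varphi)_{\mathcal H}$ (both $\mathcal H$-triples, $H\le G$) means: (i) $G=NH$, $N\cap H=M$, $\mathbf C_G(N)\subseteq H$; (ii) $(H\times\mathcal H)_\theta=(H\times\mathcal H)_\varphi$; (iii) there are projective representations $\mathcal P$ of $G_\theta$ associated with $\theta$ and $\mathcal P'$ of $H_\varphi$ associated with $\varphi$, entries in $\mathbb Q^{\mathrm{ab}}$, factor sets with root-of-unity values agreeing on $H_\theta\times H_\theta$, and $\mathcal P(c),\mathcal P'(c)$ the same scalar for all $c\in\mathbf C_G(N)$; (iv) $\mu_a=\mu'_a$ on $H_\theta$ for all $a\in(H\times\mathcal H)_\theta$. *)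

From HB Require Import structures.
From mathcomp Require Import all_boot all_order all_algebra all_fingroup all_solvable all_field all_character.
Set Implicit Arguments. Unset Strict Implicit. Unset Printing Implicit Defensive.
Import Order.TTheory GRing.Theory Num.Theory.
Local Open Scope group_scope.
Local Open Scope ring_scope.

(* Elements of Gal(Q^ab/Q) are represented by ring endomorphisms (= automorphisms)
   of algC; every such map restricts to an element of Gal(Q^ab/Q), and every element
   of Gal(Q^ab/Q) extends to one.  All notions below only depend on the restriction. *)
Notation galC := {rmorphism algC -> algC}.

Definition inQab (z : algC) : Prop :=
  exists (n : nat) (q : {poly rat}) (w : algC),
    (0 < n)%N /\ n.-primitive_root w /\ z = (map_poly ratr q).[w].

(* sigma is in the subgroup \mathcal H : there is an integer f with
   sigma(xi) = xi^(p^f) for every root of unity xi of order prime to p.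
   f >= 0 is the left disjunct, f = -e < 0 the right one. *)
Definition inHgal (p : nat) (u : galC) : Prop :=
  exists f : nat,
    (forall (n : nat) (xi : algC), (0 < n)%N -> coprime n p -> xi ^+ n = 1 ->
        u xi = xi ^+ (p ^ f)) \/
    (forall (n : nat) (xi : algC), (0 < n)%N -> coprime n p -> xi ^+ n = 1 ->
        xi = (u xi) ^+ (p ^ f)).

Section Defs.
Variable gT : finGroupType.
Implicit Types (G H N M S : {set gT}).

Definition fixes_char N (th : gT -> algC) (g : gT) (u : galC) : Prop :=
  forall n, n \in N -> u (th (g * n * g^-1)%g) = th n.

Definition in_Horbit (p : nat) N (th : gT -> algC) (g : gT) : Prop :=
  exists u : galC, inHgal p u /\
    forall n, n \in N -> th (g * n * g^-1)%g = u (th n).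

Definition char_stab G N (th : gT -> algC) : {set gT} :=
  [set g in G | [forall n in N, th (g * n * g^-1)%g == th n]].

Definition Htriple (p : nat) (G N : {group gT}) (t : Iirr N) : Prop :=
  N <| G /\ forall g, g \in G -> in_Horbit p N 'chi_t g.

Definition assoc_proj S N (th : gT -> algC) n (P : gT -> 'M[algC]_n)
    (alpha : gT -> gT -> algC) : Prop :=
  [/\ forall x, x \in S -> P x \in unitmx,
      forall x y, x \in S -> y \in S ->
        alpha x y != 0 /\ P x *m P y = alpha x y *: P (x * y)%g,
      P 1%g = 1%:M,
      forall x, x \in N -> \tr (P x) = th x &
      forall x g, x \in N -> g \in S ->
        P (x * g)%g = P x *m P g /\ P (g * x)%g = P g *m P x].

Definition is_mu S N n (P : gT -> 'M[algC]_n) (x : gT) (u : galC)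
    (mu : gT -> algC) : Prop :=
  [/\ forall y, y \in S -> mu y != 0,
      forall k y, k \in N -> y \in S -> mu (k * y)%g = mu y,
      mu 1%g = 1 &
      exists2 A : 'M[algC]_n, A \in unitmx &
        forall y, y \in S ->
          map_mx u (P (x * y * x^-1)%g) = mu y *: (invmx A *m P y *m A)].

Definition Hcgeq (p : nat) (G N : {group gT}) (t : Iirr N)
    (H M : {group gT}) (f : Iirr M) : Prop :=
  let th := 'chi_t in let ph := 'chi_f in
  let Gt := char_stab G N th in
  let Ht := char_stab H N th in
  let Hf := char_stab H M ph in
  [/\ @Htriple p G N t, @Htriple p H M f,
      (* (i) *)
      [/\ G :=: (N * H)%g, N :&: H = M & 'C_G(N) \subset H],
      (* (ii) *)
      (forall h (u : galC), h \in H -> inHgal p u ->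
          fixes_char N th h u <-> fixes_char M ph h u) &
      (* (iii) and (iv) *)
      exists (n n' : nat) (P : gT -> 'M[algC]_n) (P' : gT -> 'M[algC]_n')
             (alpha alpha' : gT -> gT -> algC),
        [/\ assoc_proj Gt N th P alpha /\
            assoc_proj Hf M ph P' alpha',
            (forall x i j, x \in Gt -> inQab (P x i j)) /\
            (forall x i j, x \in Hf -> inQab (P' x i j)),
            (forall x y, x \in Gt -> y \in Gt ->
               exists2 k : nat, (0 < k)%N & alpha x y ^+ k = 1) /\
            (forall x y, x \in Hf -> y \in Hf ->
               exists2 k : nat, (0 < k)%N & alpha' x y ^+ k = 1),
            (forall x y, x \in Ht -> y \in Ht -> alpha x y = alpha' x y) /\
            (forall c, c \in 'C_G(N) ->
               exists s : algC, P c = s%:M /\ P' c = s%:M) &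
            (forall h (u : galC), h \in H -> inHgal p u -> fixes_char N th h u ->
               exists mu mu' : gT -> algC,
                 [/\ is_mu Gt N P h u mu, is_mu Hf M P' h u mu' &
                     forall y, y \in Ht -> mu y = mu' y])]].

End Defs.

Arguments Htriple {gT} p G N t.
Arguments Hcgeq {gT} p G N t H M f.

From HB Require Import structures.
From mathcomp Require Import all_boot all_order all_algebra all_fingroup all_solvable.
From mathcomp Require Import all_field all_character mxtens.
Set Implicit Arguments. Unset Strict Implicit. Unset Printing Implicit Defensive.
Import GRing.Theory Num.Theory.
Local Open Scope group_scope.
Local Open Scope ring_scope.

(* Everything splits over the two factors.  Since theta_i(1) is a nonzero
   integer, theta_1 x theta_2 is fixed by (g, sigma) iff each theta_i is fixed
   by (g_i, sigma); hence stabilizers, H-orbit conditions and condition (ii)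
   are componentwise, and conditions (i) follow from those of the factors.
   For (iii) and (iv) take Kronecker products: P_1 (x) P_2 is a projective
   representation with factor set alpha_1 alpha_2 associated with
   theta_1 x theta_2 (the trace of a tensor product is the product of the
   traces), and conjugating by B_1 (x) B_2 shows that mu_1 mu_2 is the
   function mu attached to P_1 (x) P_2. *)

Lemma inQabM a b : inQab a -> inQab b -> inQab (a * b).
Proof.
move=> [n1 [q1 [w1 [n1_gt0 [w1_prim ->]]]]] [n2 [q2 [w2 [n2_gt0 [w2_prim ->]]]]].
have n_gt0 : (0 < n1 * n2)%N by rewrite muln_gt0 n1_gt0.
have [w w_prim] := C_prim_root_exists n_gt0.
have [i ->] := prim_rootP (dvdn_prim_root w_prim (dvdn_mulr n2 (dvdnn n1)))
  (prim_expr_order w1_prim).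
have [j ->] := prim_rootP (dvdn_prim_root w_prim (dvdn_mull n1 (dvdnn n2)))
  (prim_expr_order w2_prim).
exists (n1 * n2)%N, ((q1 \Po 'X^(n1 * n2 %/ n1 * i)) * (q2 \Po 'X^(n1 * n2 %/ n2 * j))), w.
do 2!split=> //.
by rewrite rmorphM /= hornerM !map_comp_poly !horner_comp !map_polyXn !hornerXn -!exprM.
Qed.

Lemma root_of_unityM (R : comPzRingType) (a b : R) :
  (exists2 k, (0 < k)%N & a ^+ k = 1) -> (exists2 k, (0 < k)%N & b ^+ k = 1) ->
  exists2 k, (0 < k)%N & (a * b) ^+ k = 1.
Proof.
move=> [k k_gt0 ak1] [l l_gt0 bl1]; exists (k * l)%N; first by rewrite muln_gt0 k_gt0.
by rewrite exprMn exprM ak1 expr1n mul1r mulnC exprM bl1 expr1n.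
Qed.

Section TensorProduct.
Variable R : comPzRingType.

Lemma tensmx_scalar m n (a b : R) : (a%:M : 'M_m) *t (b%:M : 'M_n) = (a * b)%:M.
Proof.
apply/matrixP=> i j; case: (mxtens_indexP i) => i1 i2; case: (mxtens_indexP j) => j1 j2.
rewrite tensmxE !mxE (can_eq (@mxtens_indexK m n)) xpair_eqE.
by case: (i1 == j1); case: (i2 == j2); rewrite ?mulr1n ?mulr0n ?mulr0 ?mul0r.
Qed.

Lemma tensmx1 m n : (1%:M : 'M[R]_m) *t (1%:M : 'M_n) = 1%:M.
Proof. by rewrite tensmx_scalar mulr1. Qed.

Lemma tensmxZ m n p q (a b : R) (A : 'M_(m, n)) (B : 'M_(p, q)) :
  (a *: A) *t (b *: B) = (a * b) *: (A *t B).
Proof. by apply/matrixP=> i j; rewrite !mxE mulrACA. Qed.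

Lemma mxtrace_tensmx m n (A : 'M[R]_m) (B : 'M[R]_n) : \tr (A *t B) = \tr A * \tr B.
Proof.
rewrite /mxtrace (reindex (@mxtens_index m n)); last first.
  by exists (@mxtens_unindex m n) => k _; [apply: mxtens_indexK | apply: mxtens_unindexK].
rewrite mulr_suml (eq_bigr (fun i => \sum_j A i i * B j j)) => [|i _]; last first.
  by rewrite mulr_sumr.
by rewrite pair_big; apply: eq_bigr => -[i j] _; rewrite tensmxE.
Qed.

End TensorProduct.

Section TensorInverse.
Variables (R : comUnitRingType) (m n : nat) (A : 'M[R]_m) (B : 'M[R]_n).
Hypotheses (A_unit : A \in unitmx) (B_unit : B \in unitmx).

Let tensmx_invmx_mul : (invmx A *t invmx B) *m (A *t B) = 1%:M.
Proof. by rewrite tensmx_mul !mulVmx // tensmx1. Qed.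

Lemma tensmx_unitmx : A *t B \in unitmx.
Proof. by case: (mulmx1_unit tensmx_invmx_mul). Qed.

Lemma invmx_tensmx : invmx (A *t B) = invmx A *t invmx B.
Proof.
by rewrite -[invmx (A *t B)]mul1mx -tensmx_invmx_mul -mulmxA mulmxV ?mulmx1 ?tensmx_unitmx.
Qed.

End TensorInverse.

Lemma inQab_tensmx m n (A : 'M[algC]_m) (B : 'M[algC]_n) :
  (forall i j, inQab (A i j)) -> (forall i j, inQab (B i j)) ->
  forall i j, inQab ((A *t B) i j).
Proof.
move=> QA QB i j; case: (mxtens_indexP i) => i1 i2; case: (mxtens_indexP j) => j1 j2.
by rewrite tensmxE; apply: inQabM.
Qed.

Lemma inHgal_id p : inHgal p idfun.
Proof. by exists 0%N; left=> n xi _ _ _; rewrite expn0 expr1. Qed.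

Lemma inHgal_invaut p (u : galC) : inHgal p u -> inHgal p (algC_invaut u).
Proof.
have unity_invaut n xi : xi ^+ n = 1 -> algC_invaut u xi ^+ n = 1.
  by move=> xin1; rewrite -rmorphXn /= xin1 rmorph1.
case=> e [uE|uE]; exists e; [right | left] => n xi n_gt0 n_p xin1.
  by rewrite -(uE n _ n_gt0 n_p (unity_invaut _ _ xin1)) algC_invautK.
by rewrite [LHS](uE n _ n_gt0 n_p (unity_invaut _ _ xin1)) algC_invautK.
Qed.

Section Stabilizers.
Variables (gT : finGroupType) (p : nat) (A : {set gT}) (th : gT -> algC).

Lemma in_HorbitP g :
  in_Horbit p A th g <-> exists2 u, inHgal p u & fixes_char A th g u.
Proof.
split=> [[u [uH thJ]] | [u uH fix_u]]; exists (algC_invaut u).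
- exact: inHgal_invaut.
- by move=> n nA; rewrite thJ //; apply: algC_autK.
- split=> [|n nA]; first exact: inHgal_invaut.
  by rewrite -(fix_u n nA); symmetry; apply: algC_autK.
Qed.

Lemma char_stabP (G : {set gT}) g : g \in char_stab G A th <-> g \in G /\ fixes_char A th g idfun.
Proof.
rewrite inE; split=> [/andP[gG /forall_inP thJ] | [-> thJ]].
  by split=> // n /thJ/eqP.
by apply/forall_inP => n /thJ /= ->.
Qed.

Lemma char_stabS (G G' : {set gT}) : G \subset G' -> char_stab G A th \subset char_stab G' A th.
Proof. by move=> sGG'; apply/subsetP => g /char_stabP[/(subsetP sGG') ? ?]; apply/char_stabP. Qed.

Lemma fixes_char_in_Horbit g : fixes_char A th g idfun -> in_Horbit p A th g.
Proof. by move=> thJ; apply/in_HorbitP; exists idfun; first exact: inHgal_id. Qed.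

End Stabilizers.

Lemma cfun_inner_conj (gT : finGroupType) (G : {group gT}) (phi : 'CF(G)) g x :
  g \in G -> phi (g * x * g^-1)%g = phi x.
Proof. by move=> gG; rewrite -mulgA -{1}[g]invgK -conjgE cfunJ ?groupV. Qed.

Lemma in_Horbit_mull p (gT : finGroupType) (N : {group gT}) (phi : 'CF(N)) x g :
  x \in N -> in_Horbit p N phi g -> in_Horbit p N phi (x * g).
Proof.
move=> xN [u [uH phiJ]]; exists u; split=> // n nN.
have -> : (x * g * n * (x * g)^-1 = x * (g * n * g^-1) * x^-1)%g by rewrite invMg !mulgA.
by rewrite cfun_inner_conj // phiJ.
Qed.

Lemma in_setX_fst_snd (T1 T2 : finType) (A1 : {set T1}) (A2 : {set T2}) x :
  x \in setX A1 A2 -> x.1 \in A1 /\ x.2 \in A2.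
Proof. by case: x => x1 x2; rewrite in_setX => /andP. Qed.

Lemma subsetX_fst_snd (T1 T2 : finType) (A1 : {set T1}) (A2 : {set T2})
    (S : {set T1 * T2}) x :
  S \subset setX A1 A2 -> x \in S -> x.1 \in A1 /\ x.2 \in A2.
Proof. by move=> sSX /(subsetP sSX)/in_setX_fst_snd. Qed.

Lemma setXI (T1 T2 : finType) (A1 B1 : {set T1}) (A2 B2 : {set T2}) :
  setX (A1 :&: B1) (A2 :&: B2) = setX A1 A2 :&: setX B1 B2.
Proof. by apply/setP => -[x1 x2]; rewrite !inE /= andbACA. Qed.

Lemma setXM (gT1 gT2 : finGroupType) (A1 B1 : {set gT1}) (A2 B2 : {set gT2}) :
  setX (A1 * B1)%g (A2 * B2)%g = (setX A1 A2 * setX B1 B2)%g.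
Proof.
apply/setP => -[g1 g2]; rewrite in_setX; apply/andP/mulsgP.
  case=> /mulsgP[a1 b1 a1A b1B ->] /mulsgP[a2 b2 a2A b2B ->].
  by exists (a1, a2) (b1, b2); rewrite ?in_setX ?a1A ?a2A ?b1B ?b2B.
case=> -[a1 a2] [b1 b2]; rewrite !in_setX => /andP[a1A a2A] /andP[b1B b2B] [-> ->].
by split; apply: mem_mulg.
Qed.

Section DirectProduct.
Variables gT1 gT2 : finGroupType.

Lemma normal_setX (A1 B1 : {group gT1}) (A2 B2 : {group gT2}) :
  A1 <| B1 -> A2 <| B2 -> setX A1 A2 <| setX B1 B2.
Proof.
move=> /andP[sAB1 nAB1] /andP[sAB2 nAB2]; rewrite /normal setXS //=.
apply/subsetP => -[g1 g2]; rewrite in_setX => /andP[g1B g2B].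
rewrite inE; apply/subsetP => -[x1 x2]; rewrite mem_conjg !in_setX.
change (((x1 ^ g1^-1)%g \in A1) && ((x2 ^ g2^-1)%g \in A2) -> (x1 \in A1) && (x2 \in A2)).
by rewrite !memJ_norm ?groupV ?(subsetP nAB1) ?(subsetP nAB2).
Qed.

Lemma subcent_setX (G1 : {set gT1}) (N1 : {group gT1})
    (G2 : {set gT2}) (N2 : {group gT2}) :
  'C_(setX G1 G2)(setX N1 N2) \subset setX 'C_G1(N1) 'C_G2(N2).
Proof.
apply/subsetP => -[c1 c2] /setIP[]; rewrite !in_setX => /andP[c1G c2G] /centP cN.
rewrite !inE c1G c2G /=; apply/andP; split; apply/centP => n nN.
  by have := cN (n, 1%g); rewrite in_setX nN group1 => /(_ isT) /(congr1 fst).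
by have := cN (1%g, n); rewrite in_setX nN group1 => /(_ isT) /(congr1 snd).
Qed.

End DirectProduct.

Section CharacterProduct.
Variables (gT1 gT2 : finGroupType) (A1 : {group gT1}) (A2 : {group gT2}).
Variables (i1 : Iirr A1) (i2 : Iirr A2) (th : gT1 * gT2 -> algC).
Hypothesis th_prod : forall x, th x = 'chi_i1 x.1 * 'chi_i2 x.2.

Lemma fixes_char_setX g u :
  fixes_char (setX A1 A2) th g u <->
  fixes_char A1 'chi_i1 g.1 u /\ fixes_char A2 'chi_i2 g.2 u.
Proof.
have u_irr1 gT (G : {group gT}) (i : Iirr G) : u ('chi_i 1%g) = 'chi_i 1%g.
  by have := cfAut_irr1 u i; rewrite cfunE.
split=> [thJ | [thJ1 thJ2] [n1 n2]]; last first.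
  by rewrite in_setX => /andP[n1A n2A]; rewrite !th_prod /= rmorphM thJ1 // thJ2.
split=> n nA.
  have := thJ (n, 1%g); rewrite in_setX nA group1 !th_prod /= mulg1 mulgV rmorphM u_irr1.
  by move=> /(_ isT) /mulIf; apply; apply: irr1_neq0.
have := thJ (1%g, n); rewrite in_setX nA group1 !th_prod /= mulg1 mulgV rmorphM u_irr1.
by move=> /(_ isT) /mulfI; apply; apply: irr1_neq0.
Qed.

Lemma char_stab_setX (B1 : {set gT1}) (B2 : {set gT2}) :
  char_stab (setX B1 B2) (setX A1 A2) th =
  setX (char_stab B1 A1 'chi_i1) (char_stab B2 A2 'chi_i2).
Proof.
apply/setP => -[g1 g2]; rewrite in_setX; apply/idP/andP.
  case/char_stabP; rewrite in_setX => /andP[g1B g2B] /fixes_char_setX[thJ1 thJ2].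
  by split; apply/char_stabP.
case=> /char_stabP[g1B thJ1] /char_stabP[g2B thJ2].
by apply/char_stabP; rewrite in_setX g1B g2B; split=> //; apply/fixes_char_setX.
Qed.

End CharacterProduct.

Section TensorProjectiveRepresentation.
Variables (gT1 gT2 : finGroupType) (S1 A1 : {set gT1}) (S2 A2 : {set gT2}).
Variables (S : {set gT1 * gT2}) (n1 n2 : nat).
Variables (P1 : gT1 -> 'M[algC]_n1) (P2 : gT2 -> 'M[algC]_n2).
Hypothesis sSX : S \subset setX S1 S2.

Lemma assoc_proj_tensmx th1 th2 (th : gT1 * gT2 -> algC) a1 a2 :
  assoc_proj S1 A1 th1 P1 a1 -> assoc_proj S2 A2 th2 P2 a2 ->
  (forall x, th x = th1 x.1 * th2 x.2) ->
  assoc_proj S (setX A1 A2) th (fun x => P1 x.1 *t P2 x.2)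
    (fun x y => a1 x.1 y.1 * a2 x.2 y.2).
Proof.
case=> [P1_unit P1M P1_1 P1_tr P1_A] [P2_unit P2M P2_1 P2_tr P2_A] th_prod; split.
- move=> x /(subsetX_fst_snd sSX)[x1S x2S].
  by apply: tensmx_unitmx; [apply: P1_unit | apply: P2_unit].
- move=> x y /(subsetX_fst_snd sSX)[x1S x2S] /(subsetX_fst_snd sSX)[y1S y2S].
  have [a1_neq0 P1xy] := P1M _ _ x1S y1S; have [a2_neq0 P2xy] := P2M _ _ x2S y2S.
  by rewrite mulf_neq0 // tensmx_mul P1xy P2xy tensmxZ.
- by rewrite /= P1_1 P2_1 tensmx1.
- by move=> x /in_setX_fst_snd[x1A x2A]; rewrite mxtrace_tensmx P1_tr // P2_tr // th_prod.
- move=> x g /in_setX_fst_snd[x1A x2A] /(subsetX_fst_snd sSX)[g1S g2S].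
  have [P1xg P1gx] := P1_A _ _ x1A g1S; have [P2xg P2gx] := P2_A _ _ x2A g2S.
  by rewrite /= P1xg P2xg P1gx P2gx !tensmx_mul.
Qed.

Lemma is_mu_tensmx (x : gT1 * gT2) (u : galC) mu1 mu2 :
  is_mu S1 A1 P1 x.1 u mu1 -> is_mu S2 A2 P2 x.2 u mu2 ->
  is_mu S (setX A1 A2) (fun y => P1 y.1 *t P2 y.2) x u (fun y => mu1 y.1 * mu2 y.2).
Proof.
case=> [mu1_neq0 mu1N mu1_1 [B1 B1_unit P1J]] [mu2_neq0 mu2N mu2_1 [B2 B2_unit P2J]]; split.
- by move=> y /(subsetX_fst_snd sSX)[y1S y2S]; rewrite mulf_neq0 ?mu1_neq0 ?mu2_neq0.
- move=> k y /in_setX_fst_snd[k1A k2A] /(subsetX_fst_snd sSX)[y1S y2S].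
  by rewrite /= mu1N // mu2N.
- by rewrite /= mu1_1 mu2_1 mulr1.
exists (B1 *t B2); first exact: tensmx_unitmx.
move=> y /(subsetX_fst_snd sSX)[y1S y2S].
by rewrite map_mxT /= P1J // P2J // tensmxZ invmx_tensmx // !tensmx_mul.
Qed.

End TensorProjectiveRepresentation.

Lemma Hcgeq_subgroups p (gT : finGroupType) (G N H M : {group gT}) t f :
  Hcgeq p G N t H M f -> [/\ M \subset N, M \subset H & H \subset G].
Proof. by case=> _ _ [defG capNH _] _ _; rewrite -capNH subsetIl subsetIr defG mulG_subr. Qed.

Section CgeqDirectProduct.
Variables (p : nat) (gT1 gT2 : finGroupType).
Variables (G1 N1 H1 M1 : {group gT1}) (t1 : Iirr N1) (f1 : Iirr M1).
Variables (G2 N2 H2 M2 : {group gT2}) (t2 : Iirr N2) (f2 : Iirr M2).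
Variables (t : Iirr (setX N1 N2)) (f : Iirr (setX M1 M2)) (GT HT : {group gT1 * gT2}).
Hypotheses (HC1 : Hcgeq p G1 N1 t1 H1 M1 f1) (HC2 : Hcgeq p G2 N2 t2 H2 M2 f2).
Hypothesis chi_t_prod : forall x, 'chi_t x = 'chi_t1 x.1 * 'chi_t2 x.2.
Hypothesis chi_f_prod : forall x, 'chi_f x = 'chi_f1 x.1 * 'chi_f2 x.2.
Hypothesis GT_def :
  forall g, g \in GT <-> g \in setX G1 G2 /\ in_Horbit p (setX N1 N2) 'chi_t g.
Hypothesis HT_def :
  forall h, h \in HT <-> h \in setX H1 H2 /\ in_Horbit p (setX M1 M2) 'chi_f h.

Local Notation N := (setX N1 N2).
Local Notation M := (setX M1 M2).

Let sGT : GT \subset setX G1 G2. Proof. by apply/subsetP => g /GT_def[]. Qed.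
Let sHT : HT \subset setX H1 H2. Proof. by apply/subsetP => h /HT_def[]. Qed.

Let sCGT : 'C_GT(N) \subset setX 'C_G1(N1) 'C_G2(N2).
Proof. exact: subset_trans (setSI _ sGT) (subcent_setX _ _ _ _). Qed.

Let stab_GT_N :
  char_stab GT N 'chi_t \subset setX (char_stab G1 N1 'chi_t1) (char_stab G2 N2 'chi_t2).
Proof. by rewrite -(char_stab_setX chi_t_prod) char_stabS. Qed.

Let stab_HT_N :
  char_stab HT N 'chi_t \subset setX (char_stab H1 N1 'chi_t1) (char_stab H2 N2 'chi_t2).
Proof. by rewrite -(char_stab_setX chi_t_prod) char_stabS. Qed.

Let stab_HT_M :
  char_stab HT M 'chi_f \subset setX (char_stab H1 M1 'chi_f1) (char_stab H2 M2 'chi_f2).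
Proof. by rewrite -(char_stab_setX chi_f_prod) char_stabS. Qed.

Lemma fixes_char_setX_compat h u : h \in setX H1 H2 -> inHgal p u ->
  fixes_char N 'chi_t h u <-> fixes_char M 'chi_f h u.
Proof.
case: HC1 HC2 => _ _ _ compat1 _ [_ _ _ compat2 _].
case: h => h1 h2; rewrite in_setX => /andP[h1H h2H] uH.
have [e1 e2] := (compat1 h1 u h1H uH, compat2 h2 u h2H uH).
split=> [/(fixes_char_setX chi_t_prod)[/e1 ? /e2 ?] | /(fixes_char_setX chi_f_prod)[/e1 ? /e2 ?]].
  exact/(fixes_char_setX chi_f_prod).
exact/(fixes_char_setX chi_t_prod).
Qed.

Lemma in_Horbit_setX_compat h : h \in setX H1 H2 ->
  in_Horbit p M 'chi_f h <-> in_Horbit p N 'chi_t h.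
Proof.
move=> hH; split=> /in_HorbitP[u uH fix_u]; apply/in_HorbitP; exists u => //.
  exact/(fixes_char_setX_compat hH uH).
exact/(fixes_char_setX_compat hH uH).
Qed.

Lemma setX_sub_GT : N \subset GT.
Proof.
have [[[/normal_sub sNG1 _] _ _ _ _] [[/normal_sub sNG2 _] _ _ _ _]] := (HC1, HC2).
apply/subsetP => n nN; apply/GT_def; split; first by rewrite (subsetP (setXS sNG1 sNG2)).
by apply: fixes_char_in_Horbit => m _; apply: cfun_inner_conj.
Qed.

Lemma setX_sub_HT : M \subset HT.
Proof.
have [[_ sMH1 _] [_ sMH2 _]] := (Hcgeq_subgroups HC1, Hcgeq_subgroups HC2).
apply/subsetP => m mM; apply/HT_def; split; first by rewrite (subsetP (setXS sMH1 sMH2)).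
by apply: fixes_char_in_Horbit => n _; apply: cfun_inner_conj.
Qed.

Lemma HT_sub_GT : HT \subset GT.
Proof.
have [[_ _ sHG1] [_ _ sHG2]] := (Hcgeq_subgroups HC1, Hcgeq_subgroups HC2).
apply/subsetP => h /HT_def[hH h_orb]; apply/GT_def.
by split; [rewrite (subsetP (setXS sHG1 sHG2)) | apply/in_Horbit_setX_compat].
Qed.

Lemma Htriple_GT : Htriple p GT N t.
Proof.
have [[[nsNG1 _] _ _ _ _] [[nsNG2 _] _ _ _ _]] := (HC1, HC2).
split; last by move=> g /GT_def[].
exact: normalS setX_sub_GT sGT (normal_setX nsNG1 nsNG2).
Qed.

Lemma Htriple_HT : Htriple p HT M f.
Proof.
have [[_ [nsMH1 _] _ _ _] [_ [nsMH2 _] _ _ _]] := (HC1, HC2).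
split; last by move=> h /HT_def[].
exact: normalS setX_sub_HT sHT (normal_setX nsMH1 nsMH2).
Qed.

Lemma GT_mul_setX_HT : GT :=: (N * HT)%g.
Proof.
have [[_ _ [defG1 _ _] _ _] [_ _ [defG2 _ _] _ _]] := (HC1, HC2).
apply/eqP; rewrite eqEsubset mul_subG ?setX_sub_GT ?HT_sub_GT // andbT.
apply/subsetP => g /GT_def[]; rewrite defG1 defG2 setXM => /mulsgP[x h xN hH ->] xh_orb.
rewrite mem_mulg //; apply/HT_def; split=> //; apply/in_Horbit_setX_compat => //.
by rewrite -[h](mulKg x); apply: in_Horbit_mull; rewrite ?groupV.
Qed.

Lemma setX_cap_HT : N :&: HT = M.
Proof.
have [[_ _ [_ capNH1 _] _ _] [_ _ [_ capNH2 _] _ _]] := (HC1, HC2).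
have [[sMN1 _ _] [sMN2 _ _]] := (Hcgeq_subgroups HC1, Hcgeq_subgroups HC2).
apply/eqP; rewrite eqEsubset subsetI setX_sub_HT setXS //=.
by rewrite -capNH1 -capNH2 setXI setIS.
Qed.

Lemma cent_setX_sub_HT : 'C_GT(N) \subset HT.
Proof.
have [[_ _ [_ _ sCH1] _ _] [_ _ [_ _ sCH2] _ _]] := (HC1, HC2).
have [[sMN1 _ _] [sMN2 _ _]] := (Hcgeq_subgroups HC1, Hcgeq_subgroups HC2).
apply/subsetP => c cC; apply/HT_def; split.
  exact: subsetP (subset_trans sCGT (setXS sCH1 sCH2)) c cC.
apply: fixes_char_in_Horbit => m mM /=; case/setIP: cC => _ /centP cN.
by rewrite (cN m) ?mulgK // (subsetP (setXS sMN1 sMN2)).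
Qed.

Lemma Hcgeq_setX : Hcgeq p GT N t HT M f.
Proof.
split; [exact: Htriple_GT | exact: Htriple_HT | | | ].
- by split; [exact: GT_mul_setX_HT | exact: setX_cap_HT | exact: cent_setX_sub_HT].
- by move=> h u /(subsetP sHT); apply: fixes_char_setX_compat.
case: HC1 => _ _ _ _ [n1 [n1' [P1 [P1' [a1 [a1' [[P1A P1'A] [P1Q P1'Q] [a1U a1'U]]]]]]]].
move=> [a1E P1C] mu1P.
case: HC2 => _ _ _ _ [n2 [n2' [P2 [P2' [a2 [a2' [[P2A P2'A] [P2Q P2'Q] [a2U a2'U]]]]]]]].
move=> [a2E P2C] mu2P.
exists (n1 * n2)%N, (n1' * n2')%N.
exists (fun x => P1 x.1 *t P2 x.2), (fun x => P1' x.1 *t P2' x.2).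
exists (fun x y => a1 x.1 y.1 * a2 x.2 y.2), (fun x y => a1' x.1 y.1 * a2' x.2 y.2).
split.
- split; [exact (assoc_proj_tensmx stab_GT_N P1A P2A chi_t_prod) |
         exact (assoc_proj_tensmx stab_HT_M P1'A P2'A chi_f_prod)].
- split=> x i j.
    move=> /(subsetX_fst_snd stab_GT_N)[x1S x2S].
    by apply: inQab_tensmx => ? ?; [exact: P1Q | exact: P2Q].
  move=> /(subsetX_fst_snd stab_HT_M)[x1S x2S].
  by apply: inQab_tensmx => ? ?; [exact: P1'Q | exact: P2'Q].
- split=> x y.
    move=> /(subsetX_fst_snd stab_GT_N)[x1S x2S] /(subsetX_fst_snd stab_GT_N)[y1S y2S].
    by apply: root_of_unityM; [apply: a1U | apply: a2U].
  move=> /(subsetX_fst_snd stab_HT_M)[x1S x2S] /(subsetX_fst_snd stab_HT_M)[y1S y2S].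
  by apply: root_of_unityM; [apply: a1'U | apply: a2'U].
- split=> [x y | c].
    move=> /(subsetX_fst_snd stab_HT_N)[x1S x2S] /(subsetX_fst_snd stab_HT_N)[y1S y2S].
    by rewrite /= a1E // a2E.
  move=> /(subsetX_fst_snd sCGT)[/P1C[s1 [-> ->]] /P2C[s2 [-> ->]]].
  by exists (s1 * s2); rewrite !tensmx_scalar.
move=> h u /(subsetX_fst_snd sHT)[h1H h2H] uH.
move=> /(fixes_char_setX chi_t_prod)[fix1 fix2].
have [mu1 [mu1' [mu1P' mu1'P mu1E]]] := mu1P _ _ h1H uH fix1.
have [mu2 [mu2' [mu2P' mu2'P mu2E]]] := mu2P _ _ h2H uH fix2.
exists (fun y => mu1 y.1 * mu2 y.2), (fun y => mu1' y.1 * mu2' y.2); split.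
- exact (is_mu_tensmx stab_GT_N mu1P' mu2P').
- exact (is_mu_tensmx stab_HT_M mu1'P mu2'P).
- by move=> y /(subsetX_fst_snd stab_HT_N)[y1S y2S]; rewrite /= mu1E // mu2E.
Qed.

End CgeqDirectProduct.

Unset Implicit Arguments.
Set Strict Implicit.

Theorem lemma2p5 (p : nat) (gT1 gT2 : finGroupType)
    (G1 N1 H1 M1 : {group gT1}) (t1 : Iirr N1) (f1 : Iirr M1)
    (G2 N2 H2 M2 : {group gT2}) (t2 : Iirr N2) (f2 : Iirr M2)
    (t : Iirr (setX N1 N2)) (f : Iirr (setX M1 M2)) :
  prime p ->
  Hcgeq p G1 N1 t1 H1 M1 f1 ->
  Hcgeq p G2 N2 t2 H2 M2 f2 ->
  (forall x : gT1 * gT2, 'chi_t x = 'chi_t1 x.1 * 'chi_t2 x.2) ->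
  (forall x : gT1 * gT2, 'chi_f x = 'chi_f1 x.1 * 'chi_f2 x.2) ->
  forall GT HT : {group (gT1 * gT2)},
    (forall g, g \in GT <-> g \in setX G1 G2 /\ in_Horbit p (setX N1 N2) 'chi_t g) ->
    (forall h, h \in HT <-> h \in setX H1 H2 /\ in_Horbit p (setX M1 M2) 'chi_f h) ->
    Hcgeq p GT (setX N1 N2) t HT (setX M1 M2) f.
Proof.
move=> _ HC1 HC2 chi_t_prod chi_f_prod GT HT GT_def HT_def.
exact (Hcgeq_setX HC1 HC2 chi_t_prod chi_f_prod GT_def HT_def).
Qed.
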